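(* Let $\diamond$ and $\circ$ be associative binary operations on a set $A$ such that $(A,\diamond)$ is a left cancellative semigroup. Consider the statements: (1) There exists a function $\sigma:A\to A$ such that for all $a,b,c\in A$, $\sigma(a)\le a\circ c$ and $a\circ(b\diamond c)=(a\circ b)\diamond\underline{\sigma(a)^\diamond\diamond(a\circ c)}$. (2) There exists a function $\lambda:A\times A\to A$ such that $(A,\diamond,\circ,\lambda)$ is a left semi-truss. (3) For all $a,b,c,d\in A$ with $c\le d$, one has $a\circ c\le a\circ d$ and $a\circ\big(b\diamond\underline{c^\diamond\diamond d}\big)=(a\circ b)\diamond\underline{(a\circ c)^\diamond\diamond(a\circ d)}$. Then (1) implies (2) and (2) implies (3). If moreover $(A,\diamond)$ has an idempotent, then (1), (2), (3) are all equivalent.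
   Context: A left semi-truss $(A,\diamond,\circ,\lambda)$ is a set $A$ with two associative binary operations $\diamond,\circ$ and a function $\lambda:A\times A\to A$ such that $a\circ(b\diamond c)=(a\circ b)\diamond\lambda(a,c)$ for all $a,b,c\in A$. A semigroup $(A,\diamond)$ is left cancellative if $a\diamond b=a\diamond c$ implies $b=c$. On a left cancellative semigroup define the preorder $a\le b$ iff there exists $c\in A$ with $a\diamond c=b$; by left cancellation such $c$ is unique and is denoted $\underline{a^\diamond\diamond b}$ (a single element, characterised by $a\diamond\underline{a^\diamond\diamond b}=b$). *)

Definition associative {A : Type} (op : A -> A -> A) : Prop :=
  forall a b c, op a (op b c) = op (op a b) c.

Definition left_cancellative {A : Type} (op : A -> A -> A) : Prop :=
  forall a b c, op a b = op a c -> b = c.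

Definition dle {A : Type} (dm : A -> A -> A) (a b : A) : Prop :=
  exists c, dm a c = b.

(* x is the element underline{a^<> <> b}, i.e. a <> x = b
   (unique when dm is left cancellative) *)
Definition is_ldiv {A : Type} (dm : A -> A -> A) (a b x : A) : Prop :=
  dm a x = b.

Definition left_semi_truss {A : Type} (dm cm : A -> A -> A)
    (lam : A -> A -> A) : Prop :=
  associative dm /\ associative cm /\
  forall a b c, cm a (dm b c) = dm (cm a b) (lam a c).

Definition cond1 {A : Type} (dm cm : A -> A -> A) : Prop :=
  exists sigma : A -> A, forall a b c,
    dle dm (sigma a) (cm a c) /\
    exists x, is_ldiv dm (sigma a) (cm a c) x /\
              cm a (dm b c) = dm (cm a b) x.

Definition cond2 {A : Type} (dm cm : A -> A -> A) : Prop :=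
  exists lam : A -> A -> A, left_semi_truss dm cm lam.

Definition cond3 {A : Type} (dm cm : A -> A -> A) : Prop :=
  forall a b c d, dle dm c d ->
    dle dm (cm a c) (cm a d) /\
    forall x y, is_ldiv dm c d x -> is_ldiv dm (cm a c) (cm a d) y ->
      cm a (dm b x) = dm (cm a b) y.

From Stdlib Require Import ClassicalEpsilon.

(* (1) => (2): the quotient of [a o c] by [sigma a] depends only on [a] and [c],
   so choosing it defines [lambda].  (2) => (3): [lambda a (c^ <> d)] is the
   quotient of [a o d] by [a o c].  (3) => (1): an idempotent [e] is a left
   identity, so [c = e <> c] gives [e <= c] for every [c], and (3) applied to
   [e <= c] yields (1) with [sigma a := a o e]. *)

Section LeftCancellative.

Variables (A : Type) (dm cm : A -> A -> A).
Hypothesis dm_lcan : left_cancellative dm.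

Lemma ldiv_unique a b x y : is_ldiv dm a b x -> is_ldiv dm a b y -> x = y.
Proof.
  unfold is_ldiv. intros Hx Hy. apply (dm_lcan a). congruence.
Qed.

Lemma idempotent_left_unit (e c : A) :
  associative dm -> dm e e = e -> dm e c = c.
Proof.
  intros dm_assoc He. apply (dm_lcan e). rewrite dm_assoc, He. reflexivity.
Qed.

Lemma cond1_cond2 : associative dm -> associative cm -> cond1 dm cm -> cond2 dm cm.
Proof.
  intros dm_assoc cm_assoc [sigma Hsigma].
  assert (quot : forall a c, { x | is_ldiv dm (sigma a) (cm a c) x }).
  { intros a c. apply constructive_indefinite_description.
    exact (proj1 (Hsigma a a c)). }
  exists (fun a c => proj1_sig (quot a c)).
  split; [exact dm_assoc | split; [exact cm_assoc |]].
  intros a b c. destruct (quot a c) as [x Hx]; simpl.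
  destruct (Hsigma a b c) as [_ [y [Hy ->]]].
  rewrite (ldiv_unique _ _ _ _ Hy Hx). reflexivity.
Qed.

Lemma cond2_cond3 : cond2 dm cm -> cond3 dm cm.
Proof.
  intros [lam [_ [_ Hlam]]] a b c d [x Hx]. split.
  - exists (lam a x). rewrite <- Hlam, Hx. reflexivity.
  - intros x' y Hx' Hy.
    assert (Hlam_quot : is_ldiv dm (cm a c) (cm a d) (lam a x')).
    { unfold is_ldiv. rewrite <- Hlam, Hx'. reflexivity. }
    rewrite Hlam, (ldiv_unique _ _ _ _ Hlam_quot Hy). reflexivity.
Qed.

Lemma cond3_cond1 (e : A) :
  associative dm -> dm e e = e -> cond3 dm cm -> cond1 dm cm.
Proof.
  intros dm_assoc He H3.
  exists (fun a => cm a e). intros a b c.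
  assert (e_le_c : dle dm e c) by (exists c; exact (idempotent_left_unit e c dm_assoc He)).
  destruct (H3 a b e c e_le_c) as [[y Hy] Hcompat].
  split; [exists y; exact Hy |].
  exists y. split; [exact Hy |].
  apply Hcompat; [apply idempotent_left_unit; assumption | exact Hy].
Qed.

End LeftCancellative.

Theorem proposition2p2 (A : Type) (dm cm : A -> A -> A)
    (Hd : associative dm) (Hc : associative cm)
    (Hcan : left_cancellative dm) :
  (cond1 dm cm -> cond2 dm cm) /\
  (cond2 dm cm -> cond3 dm cm) /\
  ((exists e : A, dm e e = e) ->
     (cond1 dm cm <-> cond2 dm cm) /\ (cond2 dm cm <-> cond3 dm cm)).
Proof.
  pose proof (cond1_cond2 A dm cm Hcan Hd Hc) as H12.
  pose proof (cond2_cond3 A dm cm Hcan) as H23.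
  split; [exact H12 | split; [exact H23 |]].
  intros [e He].
  pose proof (cond3_cond1 A dm cm Hcan e Hd He) as H31.
  split; split; auto.
Qed.
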